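(* Let $\mathfrak{g}$ be a Leibniz algebra and consider a commutative diagram of Leibniz algebras with exact rows $$\begin{array}{ccccccccc}0\to&\mathfrak{m}_1&\to&\mathfrak{p}_1&\to&\mathfrak{g}&\to0\\ &\downarrow\alpha&&\downarrow\beta&&\downarrow\gamma&\\ 0\to&\mathfrak{m}_2&\to&\mathfrak{p}_2&\to&\mathfrak{g}&\to0\end{array}$$ such that the bottom row is a $\mathrm{Lie}$-stem extension. If $\gamma$ is surjective, then $\beta$ is surjective.
   Context: Fix a field $\mathbb{K}$ with $\frac12\in\mathbb{K}$. A Leibniz algebra is a $\mathbb{K}$-vector space with a bilinear bracket satisfying $[x,[y,z]]=[[x,y],z]-[[x,z],y]$. $\mathfrak{p}^{\mathrm{ann}}$ is the span of all $[x,x]$, $\mathfrak{p}_{\mathrm{Lie}}=\mathfrak{p}/\mathfrak{p}^{\mathrm{ann}}$. $Z_{\mathrm{Lie}}(\mathfrak{p})=\{z:[x,z]+[z,x]=0\ \forall x\}$. An extension $0\to\mathfrak{m}\to\mathfrak{p}\to\mathfrak{g}\to0$ is a $\mathrm{Lie}$-stem extension if $\mathfrak{m}\subseteq Z_{\mathrm{Lie}}(\mathfrak{p})$ and the induced map $\mathfrak{p}_{\mathrm{Lie}}\to\mathfrak{g}_{\mathrm{Lie}}$ is an isomorphism (equivalently, $\mathfrak{m}\subseteq Z_{\mathrm{Lie}}(\mathfrak{p})\cap\mathfrak{p}^{\mathrm{ann}}$). *)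

From HB Require Import structures.
From mathcomp Require Import all_boot all_algebra.
Set Implicit Arguments. Unset Strict Implicit. Unset Printing Implicit Defensive.
Import GRing.Theory.
Local Open Scope ring_scope.

Definition surj (A B : Type) (f : A -> B) : Prop := forall y : B, exists x : A, f x = y.

Record LeibnizAlgebra (K : fieldType) := {
  lvs :> lmodType K;
  lbr : lvs -> lvs -> lvs;
  lbr_linl : forall (a : K) (x y z : lvs), lbr (a *: x + y) z = a *: lbr x z + lbr y z;
  lbr_linr : forall (a : K) (x y z : lvs), lbr z (a *: x + y) = a *: lbr z x + lbr z y;
  lbr_leibniz : forall x y z : lvs, lbr x (lbr y z) = lbr (lbr x y) z - lbr (lbr x z) y
}.

Record LeibnizHom (K : fieldType) (A B : LeibnizAlgebra K) := {
  lhom_fun :> lvs A -> lvs B;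
  lhom_linear : forall (a : K) (x y : lvs A),
      lhom_fun (a *: x + y) = a *: lhom_fun x + lhom_fun y;
  lhom_bracket : forall x y : lvs A,
      lhom_fun (lbr x y) = lbr (lhom_fun x) (lhom_fun y)
}.

Definition in_ann (K : fieldType) (P : LeibnizAlgebra K) (x : lvs P) : Prop :=
  exists s : seq (K * lvs P), x = \sum_(c <- s) c.1 *: lbr c.2 c.2.

Definition in_ZLie (K : fieldType) (P : LeibnizAlgebra K) (z : lvs P) : Prop :=
  forall x : lvs P, lbr x z + lbr z x = 0.

Definition short_exact (K : fieldType) (M P G : LeibnizAlgebra K)
    (i : LeibnizHom M P) (q : LeibnizHom P G) : Prop :=
  injective i /\ surj q /\ (forall x : lvs P, q x = 0 <-> exists m, i m = x).

(* Lie-stem extension: exact, M (its image) inside Z_Lie(P), and the induced map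
   P_Lie = P/P^ann -> G_Lie = G/G^ann is an isomorphism (bijective), written out
   on representatives. *)
Definition lie_stem (K : fieldType) (M P G : LeibnizAlgebra K)
    (i : LeibnizHom M P) (q : LeibnizHom P G) : Prop :=
  short_exact i q /\
  (forall m : lvs M, in_ZLie (i m)) /\
  (forall x y : lvs P, in_ann (q x - q y) -> in_ann (x - y)) /\
  (forall y : lvs G, exists x : lvs P, in_ann (y - q x)).

(* Write [v = beta x + i2 m] using the surjectivity of [gamma] and exactness.
   As [i2 m] lies in [Z_Lie(p2)] and [2] is invertible, [[i2 m, i2 m] = 0] and
   the cross terms cancel, so [[v, v] = beta [x, x]]: every square of [p2], hence
   all of [p2^ann], lies in the image of [beta]. The Lie-stem condition puts the
   kernel [i2 m2] of [q2] inside [p2^ann], so [v] itself is in the image. *)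

From HB Require Import structures.
From mathcomp Require Import all_boot all_algebra.
Set Implicit Arguments.
Unset Strict Implicit.
Unset Printing Implicit Defensive.
Import GRing.Theory.
Local Open Scope ring_scope.

HB.instance Definition _ (K : fieldType) (A B : LeibnizAlgebra K)
    (f : LeibnizHom A B) :=
  GRing.isLinear.Build K (lvs A) (lvs B) *:%R (lhom_fun f) (lhom_linear f).

Section Bracket.
Variables (K : fieldType) (P : LeibnizAlgebra K).

Lemma lbrDl (x y z : lvs P) : lbr (x + y) z = lbr x z + lbr y z.
Proof. by have := lbr_linl 1 x y z; rewrite !scale1r. Qed.

Lemma lbrDr (x y z : lvs P) : lbr z (x + y) = lbr z x + lbr z y.
Proof. by have := lbr_linr 1 x y z; rewrite !scale1r. Qed.

Lemma ZLie_square_eq0 (z : lvs P) : (2 : K) != 0 -> in_ZLie z -> lbr z z = 0.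
Proof.
move=> h2 /(_ z) zz; have : (2 : K) *: lbr z z = 0.
  by rewrite -[2]/(1 + 1) scalerDl scale1r zz.
by move/eqP; rewrite scaler_eq0 (negbTE h2) => /eqP.
Qed.

Lemma ZLie_square_addr (x z : lvs P) :
  (2 : K) != 0 -> in_ZLie z -> lbr (x + z) (x + z) = lbr x x.
Proof.
move=> h2 zZ; rewrite !lbrDl !lbrDr (ZLie_square_eq0 h2 zZ) addr0.
by rewrite -addrA zZ addr0.
Qed.

End Bracket.

Lemma in_ann_im_linear (K : fieldType) (U : lmodType K) (P : LeibnizAlgebra K)
    (f : {linear U -> lvs P}) (x : lvs P) :
  (forall v : lvs P, exists u, f u = lbr v v) -> in_ann x -> exists u, f u = x.
Proof.
move=> sq [s ->]; elim: s => [|c s [u fu]]; first by exists 0; rewrite big_nil raddf0.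
have [w fw] := sq c.2; exists (c.1 *: w + u).
by rewrite big_cons linearP fw fu.
Qed.

Lemma lie_stem_ker_in_ann (K : fieldType) (M P G : LeibnizAlgebra K)
    (i : LeibnizHom M P) (q : LeibnizHom P G) (m : lvs M) :
  lie_stem i q -> in_ann (i m).
Proof.
move=> [[_ [_ ker_q]] [_ [ann_refl _]]]; rewrite -[i m]subr0; apply: ann_refl.
have -> : q (i m) = 0 by apply/ker_q; exists m.
by rewrite raddf0 subrr; exists [::]; rewrite big_nil.
Qed.

Lemma im_add_ker_of_surj (K : fieldType) (g p1 m2 p2 : LeibnizAlgebra K)
    (q1 : LeibnizHom p1 g) (i2 : LeibnizHom m2 p2) (q2 : LeibnizHom p2 g)
    (beta : LeibnizHom p1 p2) (gamma : LeibnizHom g g) :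
  surj q1 -> (forall x : lvs p2, q2 x = 0 <-> exists m, i2 m = x) ->
  (forall x : lvs p1, q2 (beta x) = gamma (q1 x)) -> surj gamma ->
  forall v : lvs p2, exists x m, v = beta x + i2 m.
Proof.
move=> sq1 ker_q2 comm sg v.
have [y gy] := sg (q2 v); have [x qx] := sq1 y.
have [m im] : exists m, i2 m = v - beta x.
  by apply/ker_q2; rewrite raddfB /= comm qx gy subrr.
by exists x, m; rewrite im addrC subrK.
Qed.

Theorem mainTheorem15 (K : fieldType) (h2 : (2 : K) != 0)
    (g m1 p1 m2 p2 : LeibnizAlgebra K)
    (i1 : LeibnizHom m1 p1) (q1 : LeibnizHom p1 g)
    (i2 : LeibnizHom m2 p2) (q2 : LeibnizHom p2 g)
    (alpha : LeibnizHom m1 m2) (beta : LeibnizHom p1 p2) (gamma : LeibnizHom g g) :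
  short_exact i1 q1 ->
  short_exact i2 q2 ->
  (forall x : lvs m1, beta (i1 x) = i2 (alpha x)) ->
  (forall x : lvs p1, q2 (beta x) = gamma (q1 x)) ->
  lie_stem i2 q2 ->
  surj gamma ->
  surj beta.
Proof.
move=> [_ [sq1 _]] [_ [_ ker_q2]] _ comm stem sg.
have decomp := im_add_ker_of_surj sq1 ker_q2 comm sg.
have ZLie_i2 : forall m, in_ZLie (i2 m) by case: stem => _ [].
have squares_im : forall v : lvs p2, exists x, beta x = lbr v v.
  move=> v; have [x [m ->]] := decomp v.
  by exists (lbr x x); rewrite ZLie_square_addr // lhom_bracket.
move=> v; have [x [m ->]] := decomp v.
have [z bz] := in_ann_im_linear squares_im (lie_stem_ker_in_ann m stem).
by exists (x + z); rewrite raddfD -bz.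
Qed.
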